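(* Let $f\colon\mathbb{R}^n\to\mathbb{R}$ be a strictly convex quadratic function, $f(x)=\tfrac12x^TAx+b^Tx+c$ with $A$ symmetric positive definite, with unique minimizer $x^*$. Then the linesearch-free BFGS method, started from any $x_0\in\mathbb{R}^n$ and any symmetric positive definite $H_0$, generates iterates converging to $x^*$.
   Context: The unit-step BFGS update at a point $x$ with $g=\nabla f(x)\ne 0$ maps a symmetric positive definite $H$ to $H_+=VHV^T+\frac{ss^T}{s^Ty}$, where $s=-Hg$, $x_+=x+s$, $y=\nabla f(x_+)-g$, $V=I-\frac{sy^T}{s^Ty}$. The linesearch-free BFGS method: given the current iterate $x_k$ and matrix $H$, compute $s=-H\nabla f(x_k)$, replace $H$ by its unit-step BFGS update at $x_k$, and set $x_{k+1}=x_k+s$ if $f(x_k+s)<f(x_k)$, and $x_{k+1}=x_k$ otherwise; repeat. (If an iterate equals the minimizer, the gradient vanishes and the method stops there.) *)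

From HB Require Import structures.
From mathcomp Require Import all_boot all_order all_algebra.
From mathcomp Require Import all_classical all_reals all_analysis.
Set Implicit Arguments. Unset Strict Implicit. Unset Printing Implicit Defensive.
Import Order.TTheory GRing.Theory Num.Theory.
Local Open Scope ring_scope.

Definition spd (R : realType) (n : nat) (M : 'M[R]_n) : Prop :=
  M^T = M /\ forall v : 'cV[R]_n, v != 0 -> 0 < (v^T *m M *m v) 0 0.

Definition quadf (R : realType) (n : nat) (A : 'M[R]_n) (b : 'cV[R]_n) (c : R)
  (x : 'cV[R]_n) : R :=
  (x^T *m A *m x) 0 0 / 2 + (b^T *m x) 0 0 + c.

Definition quadgrad (R : realType) (n : nat) (A : 'M[R]_n) (b : 'cV[R]_n)
  (x : 'cV[R]_n) : 'cV[R]_n := A *m x + b.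

Definition bfgs_update (R : realType) (n : nat) (H : 'M[R]_n) (s y : 'cV[R]_n)
  : 'M[R]_n :=
  let sy := (s^T *m y) 0 0 in
  let V := 1%:M - sy^-1 *: (s *m y^T) in
  V *m H *m V^T + sy^-1 *: (s *m s^T).

Definition bfgs_step (R : realType) (n : nat) (A : 'M[R]_n) (b : 'cV[R]_n) (c : R)
  (st : 'cV[R]_n * 'M[R]_n) : 'cV[R]_n * 'M[R]_n :=
  let (x, H) := st in
  let g := quadgrad A b x in
  if g == 0 then (x, H) else
  let s := - (H *m g) in
  let y := quadgrad A b (x + s) - g in
  let H' := bfgs_update H s y in
  let x' := if quadf A b c (x + s) < quadf A b c x then x + s else x in
  (x', H').

Definition bfgs_seq (R : realType) (n : nat) (A : 'M[R]_n) (b : 'cV[R]_n) (c : R)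
  (x0 : 'cV[R]_n) (H0 : 'M[R]_n) (k : nat) : 'cV[R]_n * 'M[R]_n :=
  iter k (bfgs_step A b c) (x0, H0).

From HB Require Import structures.
From mathcomp Require Import all_boot all_order all_algebra.
From mathcomp Require Import all_classical all_reals all_analysis.
From mathcomp Require Import lra ring zify.
Import Order.TTheory GRing.Theory Num.Theory.
Import numFieldNormedType.Exports.
Local Open Scope classical_set_scope.
Local Open Scope ring_scope.
Set Implicit Arguments. Unset Strict Implicit. Unset Printing Implicit Defensive.

(* Measure the error by F(x) = (x - x* )^T A (x - x* ) = 2 (f(x) - f(x* )) and the
   matrix H by the potential Phi(H) = tr(HA) + tr(H^-1 A^-1), which is nonnegative.
   For the trial step s = -Hg, with y = As, the BFGS update lowers Phi by
   D = y^T H y / s^T y + F / g^T H g - 2, and the two Cauchy-Schwarz inequalities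
   (g^T H g)^2 <= F s^T y (for A) and (s^T y)^2 <= (g^T H g)(y^T H y) (for H) show
   that D >= 0 and that D <= 1/4 forces F(x + s) <= F(x) / 2.  The acceptance test
   keeps F non-increasing, and since Phi >= 0 at most 4 Phi(H_0) steps have D > 1/4;
   hence F(x_k) = O(2^-k), and x_k -> x*. *)

Section DotProduct.
Variables (R : comPzRingType) (n : nat).
Implicit Types (u v w : 'cV[R]_n) (M : 'M[R]_n).

Definition dot u v : R := (u^T *m v) 0 0.

Lemma dotE u v : dot u v = \sum_i u i 0 * v i 0.
Proof. by rewrite /dot !mxE; apply: eq_bigr => i _; rewrite mxE. Qed.

Lemma dotC u v : dot u v = dot v u.
Proof. by rewrite !dotE; apply: eq_bigr => i _; exact: mulrC. Qed.

Lemma dotDl u v w : dot (u + v) w = dot u w + dot v w.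
Proof. by rewrite !dotE -big_split; apply: eq_bigr => i _; rewrite mxE mulrDl. Qed.

Lemma dotZl a u v : dot (a *: u) v = a * dot u v.
Proof. by rewrite !dotE mulr_sumr; apply: eq_bigr => i _; rewrite mxE mulrA. Qed.

Lemma dotNl u v : dot (- u) v = - dot u v.
Proof. by rewrite -scaleN1r dotZl mulN1r. Qed.

Lemma dotBl u v w : dot (u - v) w = dot u w - dot v w.
Proof. by rewrite dotDl dotNl. Qed.

Lemma dotDr u v w : dot u (v + w) = dot u v + dot u w.
Proof. by rewrite dotC dotDl !(dotC u). Qed.

Lemma dotZr a u v : dot u (a *: v) = a * dot u v.
Proof. by rewrite dotC dotZl dotC. Qed.

Lemma dotNr u v : dot u (- v) = - dot u v.
Proof. by rewrite dotC dotNl dotC. Qed.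

Lemma dotBr u v w : dot u (v - w) = dot u v - dot u w.
Proof. by rewrite dotDr dotNr. Qed.

Lemma dot0l v : dot 0 v = 0.
Proof. by rewrite dotE big1 // => i _; rewrite mxE mul0r. Qed.

Lemma dot0r v : dot v 0 = 0.
Proof. by rewrite dotC dot0l. Qed.

Lemma sym_mxE M i j : M^T = M -> M i j = M j i.
Proof. by move=> symM; rewrite -{1}symM mxE. Qed.

Lemma dot_mulmxr u M v : dot u (M *m v) = dot (M^T *m u) v.
Proof. by rewrite /dot trmx_mul trmxK mulmxA. Qed.

Lemma dot_sym_mulmx u M v : M^T = M -> dot u (M *m v) = dot v (M *m u).
Proof. by move=> symM; rewrite dot_mulmxr symM dotC. Qed.

Lemma mulmx_outer m (r : 'M[R]_(m, 1)) u v : r *m (u^T *m v) = dot u v *: r.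
Proof. by rewrite {1}[u^T *m v]mx11_scalar mul_mx_scalar. Qed.

Lemma dot_delta_mx i w : dot (delta_mx i 0) w = w i 0.
Proof. by rewrite /dot trmx_delta -rowE mxE. Qed.

Lemma mulmx_delta_mx M j i : (M *m delta_mx j (0 : 'I_1)) i 0 = M i j.
Proof. by rewrite -colE mxE. Qed.

Lemma mxtrace_outer M u v : \tr (M *m (u *m v^T)) = dot v (M *m u).
Proof.
by rewrite mulmxA mxtrace_mulC {1}[v^T *m _]mx11_scalar mxtrace_scalar.
Qed.

Lemma mxtrace_outerl M u : \tr (u *m u^T *m M) = dot u (M *m u).
Proof. by rewrite mxtrace_mulC mxtrace_outer. Qed.

Lemma eq_mx_mulmx M N : (forall v : 'cV[R]_n, M *m v = N *m v) -> M = N.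
Proof.
move=> h; apply/matrixP => i j; have := h (delta_mx j (0 : 'I_1)).
by rewrite -!colE => /matrixP /(_ i 0); rewrite !mxE.
Qed.

End DotProduct.

Section PositiveForms.
Variables (R : realFieldType) (n : nat).
Implicit Types (u v e : 'cV[R]_n) (M : 'M[R]_n).

Definition psd M := forall v, 0 <= dot v (M *m v).
Definition pd M := forall v, v != 0 -> 0 < dot v (M *m v).

Lemma pd_psd M : pd M -> psd M.
Proof.
move=> pdM v; have [->|v0] := eqVneq v 0; first by rewrite dot0l.
exact/ltW/pdM.
Qed.

Lemma dot_self_gt0 v : v != 0 -> 0 < dot v v.
Proof.
move=> v0; rewrite lt_def dotE sumr_ge0 ?andbT => [|i _]; last first.
  by rewrite -expr2 sqr_ge0.
apply: contraNneq v0 => /eqP; rewrite psumr_eq0 => [/allP v0|i _]; last first.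
  by rewrite -expr2 sqr_ge0.
apply/eqP/matrixP => i j; rewrite (ord1 j) mxE.
by have /implyP/(_ isT) := v0 i (mem_index_enum i); rewrite mulf_eq0 orbb => /eqP.
Qed.

Lemma psd_cauchy_schwarz M u v : M^T = M -> psd M ->
  dot u (M *m v) ^+ 2 <= dot u (M *m u) * dot v (M *m v).
Proof.
move=> symM psdM.
set a := dot u (M *m u); set b := dot u (M *m v); set c := dot v (M *m v).
have quad_ge0 t : 0 <= a + 2 * t * b + t ^+ 2 * c.
  have := psdM (u + t *: v).
  rewrite mulmxDr -scalemxAr dotDl !dotDr !dotZl !dotZr (dot_sym_mulmx v u symM).
  by rewrite -/a -/b -/c; congr (_ <= _); ring.
have [a_ge0 c_ge0] : 0 <= a /\ 0 <= c by split; apply: psdM.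
have [c_eq0|c_neq0] := eqVneq c 0.
  have [b_eq0|b_neq0] := eqVneq b 0; first by rewrite b_eq0 c_eq0; lra.
  have := quad_ge0 (- (a + 1) / (2 * b)); rewrite c_eq0 mulr0 addr0.
  have -> : 2 * (- (a + 1) / (2 * b)) * b = - (a + 1) by field; rewrite b_neq0.
  lra.
have c_gt0 : 0 < c by rewrite lt_def c_neq0.
have := quad_ge0 (- b / c).
have -> : a + 2 * (- b / c) * b + (- b / c) ^+ 2 * c = (a * c - b ^+ 2) / c.
  by field; rewrite c_neq0.
rewrite pmulr_lge0 ?invr_gt0 //; lra.
Qed.

Lemma pd_unitmx M : pd M -> M \in unitmx.
Proof.
move=> pdM; rewrite unitmxE unitfE; apply/negP => /det0P [v v0 vM0].
have vT0 : v^T != 0 by apply: contraNneq v0 => h0; rewrite -(trmxK v) h0 trmx0.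
have := pdM _ vT0; rewrite dotC -{1}(trmxK M) -dot_mulmxr -trmx_mul vM0.
by rewrite trmx0 dot0r ltxx.
Qed.

Lemma pd_invmx M : pd M -> pd (invmx M).
Proof.
move=> pdM v v0; have uM := pd_unitmx pdM.
have -> : dot v (invmx M *m v) = dot (invmx M *m v) (M *m (invmx M *m v)).
  by rewrite mulmxA mulmxV // mul1mx dotC.
apply: pdM; apply: contraNneq v0 => h.
by rewrite -[v]mul1mx -(mulmxV uM) -mulmxA h mulmx0.
Qed.

Lemma psd_diag_ge0 M i : psd M -> 0 <= M i i.
Proof. by move=> psdM; have := psdM (delta_mx i 0); rewrite dot_delta_mx mulmx_delta_mx. Qed.

Lemma sqr_coord_le_form M e i : M^T = M -> pd M ->
  e i 0 ^+ 2 <= \tr (invmx M) * dot e (M *m e).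
Proof.
move=> symM pdM; have unitM := pd_unitmx pdM.
pose w := invmx M *m delta_mx i (0 : 'I_1).
have Mw : M *m w = delta_mx i 0 by rewrite /w mulmxA mulmxV // mul1mx.
have := psd_cauchy_schwarz w e symM (pd_psd pdM).
rewrite (dot_sym_mulmx w e symM) Mw dotC dot_delta_mx dotC dot_delta_mx.
rewrite mulmx_delta_mx => /le_trans; apply; apply: ler_wpM2r; first exact: pd_psd.
rewrite /mxtrace (bigD1 i) //= lerDl; apply: sumr_ge0 => j _.
exact/psd_diag_ge0/pd_psd/pd_invmx.
Qed.

Lemma invmx_eq M N : M *m N = 1%:M -> invmx M = N.
Proof.
move=> MN; have [uM _] := mulmx1_unit MN.
by rewrite -[invmx M]mulmx1 -MN mulmxA mulVmx // mul1mx.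
Qed.

End PositiveForms.

Section PsdDecomposition.
Variables (R : rcfType) (n : nat).
Implicit Types (P Q : 'M[R]_n).

Definition supported_from (k : nat) Q :=
  forall i j : 'I_n, ((i < k) || (j < k))%N -> Q i j = 0.

Section Pivot.
Variables (Q : 'M[R]_n) (j : 'I_n).
Hypotheses (symQ : Q^T = Q) (psdQ : psd Q).

Let p := Q j j.
Let c := col j Q.
Let pivot_compl := Q - p^-1 *: (c *m c^T).

Let p_ge0 : 0 <= p := psd_diag_ge0 j psdQ.

Lemma pivot_sq_le v : dot v c ^+ 2 <= dot v (Q *m v) * p.
Proof.
have := psd_cauchy_schwarz v (delta_mx j 0) symQ psdQ.
by rewrite dot_delta_mx mulmx_delta_mx -colE.
Qed.

(* Also for a zero pivot (where [0^-1 = 0]): its column then vanishes. *)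
Lemma pivot_cancel i : p^-1 * p * Q i j = Q i j.
Proof.
have [p_eq0|p_neq0] := eqVneq p 0; last by rewrite mulVf // mul1r.
have := pivot_sq_le (delta_mx i 0).
rewrite !dot_delta_mx mulmx_delta_mx mxE p_eq0 mulr0 => Qij_sq_le0.
suff -> : Q i j = 0 by rewrite mulr0.
by apply/eqP; rewrite -sqrf_eq0 eq_le Qij_sq_le0 sqr_ge0.
Qed.

Lemma pivot_compl_sym : pivot_compl^T = pivot_compl.
Proof. by rewrite linearB /= linearZ /= trmx_mul trmxK symQ. Qed.

Lemma pivot_compl_psd : psd pivot_compl.
Proof.
move=> v; rewrite mulmxBl -scalemxAl -mulmxA mulmx_outer dotBr !dotZr (dotC c v).
have := ler_wpM2l (ltac:(by rewrite invr_ge0) : 0 <= p^-1) (pivot_sq_le v).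
have [->|p_neq0] := eqVneq p 0; first by rewrite invr0 !mul0r subr0 => _; apply: psdQ.
by rewrite [p^-1 * (_ * p)]mulrC mulfK // -expr2 subr_ge0.
Qed.

Lemma pivot_compl_supported : supported_from j Q -> supported_from j.+1 pivot_compl.
Proof.
move=> suppQ i k ijk; rewrite !mxE big_ord1 !mxE.
have [small|] := boolP ((i < j) || (k < j))%N.
  rewrite (suppQ i k small); case/orP: small => [ij|kj].
    by rewrite (suppQ i j) ?ij // mul0r mulr0 subr0.
  by rewrite (suppQ k j) ?kj ?orbT // mulr0 mulr0 subr0.
rewrite negb_or -!leqNgt => /andP[ji jk]; case/orP: ijk => [ij|kj].
  have -> : i = j by apply/val_inj/eqP; rewrite eqn_leq ji -ltnS ij.
  by rewrite -/p (sym_mxE j k symQ) mulrA pivot_cancel subrr.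
have -> : k = j by apply/val_inj/eqP; rewrite eqn_leq jk -ltnS kj.
by rewrite -/p [Q i j * p]mulrC mulrA pivot_cancel subrr.
Qed.

Lemma pivot_compl_outer :
  pivot_compl = Q - (let d := (Num.sqrt p)^-1 *: c in d *m d^T).
Proof.
rewrite /= linearZ /= -scalemxAr -scalemxAl scalerA -expr2 exprVn sqr_sqrtr //.
Qed.

End Pivot.

(* Symmetric Gaussian elimination: [supported_from k] holds once the first k pivots
   have been eliminated. *)
Lemma psd_sum_outer Q : Q^T = Q -> psd Q ->
  exists s : seq 'cV[R]_n, Q = \sum_(d <- s) d *m d^T.
Proof.
suff sum_outer m : forall Q, Q^T = Q -> psd Q -> supported_from (n - m) Q ->
    exists s : seq 'cV[R]_n, Q = \sum_(d <- s) d *m d^T.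
  by move=> symQ psdQ; apply: (sum_outer n) => // i j; rewrite subnn.
elim: m => [|m IHm] {}Q symQ psdQ suppQ.
  exists [::]; rewrite big_nil; apply/matrixP => i j; rewrite mxE.
  by apply: suppQ; rewrite subn0 ltn_ord.
have [le_nm|lt_mn] := leqP n m.
  by apply: IHm => // i j ij; apply: suppQ; rewrite (_ : n - m.+1 = n - m)%N //; lia.
have lt_jn : (n - m.+1 < n)%N by lia.
pose j := Ordinal lt_jn.
have [s Qs] : exists s : seq 'cV[R]_n,
    Q - (let d := (Num.sqrt (Q j j))^-1 *: col j Q in d *m d^T)
    = \sum_(d <- s) d *m d^T.
  apply: IHm; rewrite -?pivot_compl_outer //.
  - exact: pivot_compl_sym.
  - exact: pivot_compl_psd.
  - by rewrite (_ : n - m = j.+1)%N; [exact: pivot_compl_supported | rewrite /=; lia].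
by exists ((Num.sqrt (Q j j))^-1 *: col j Q :: s); rewrite big_cons -Qs addrC subrK.
Qed.

Lemma mxtrace_psd_mul_ge0 P Q : psd P -> Q^T = Q -> psd Q -> 0 <= \tr (P *m Q).
Proof.
move=> psdP symQ psdQ; have [s ->] := psd_sum_outer symQ psdQ.
rewrite mulmx_sumr (big_morph _ (@mxtraceD _ n) (mxtrace0 _ _)).
by apply: sumr_ge0 => d _; rewrite mxtrace_outer.
Qed.

End PsdDecomposition.

Section BfgsUpdate.
Variables (R : realType) (n : nat).
Implicit Types (u v g s y : 'cV[R]_n) (A H B : 'M[R]_n).

Lemma trmx_1_sub_outer s y (r : R) :
  (1%:M - r *: (s *m y^T))^T = 1%:M - r *: (y *m s^T) :> 'M[R]_n.
Proof. by rewrite linearB /= linearZ /= trmx1 trmx_mul trmxK. Qed.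

Lemma bfgs_update_mulmx H s y u :
  bfgs_update H s y *m u =
  let r := (dot s y)^-1 in
  let t := H *m (u - (r * dot s u) *: y) in
  t - (r * dot y t) *: s + (r * dot s u) *: s.
Proof.
rewrite /bfgs_update /= -/(dot s y) trmx_1_sub_outer (mulmxDl _ _ u) -!mulmxA.
rewrite mulmxBl mul1mx -scalemxAl -mulmxA mulmx_outer scalerA.
rewrite mulmxBl mul1mx -scalemxAl -mulmxA mulmx_outer scalerA.
by rewrite -scalemxAl -mulmxA mulmx_outer scalerA.
Qed.

Lemma bfgs_update_sym H s y : H^T = H -> (bfgs_update H s y)^T = bfgs_update H s y.
Proof.
move=> symH; rewrite /bfgs_update /=; set V := (1%:M - _).
rewrite linearD /= !trmx_mul trmxK symH mulmxA; congr (_ + _).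
by rewrite linearZ /= trmx_mul trmxK.
Qed.

Lemma dot_bfgs_update H s y v :
  dot v (bfgs_update H s y *m v) =
  let z := v - ((dot s y)^-1 * dot s v) *: y in
  dot z (H *m z) + (dot s y)^-1 * dot s v ^+ 2.
Proof.
rewrite bfgs_update_mulmx /=; set r := (dot s y)^-1; set z := v - _ *: y.
rewrite dotDr dotBr !dotZr {1 3}/z dotBl dotZl (dotC v s); ring.
Qed.

Lemma bfgs_update_pd H s y : pd H -> 0 < dot s y -> pd (bfgs_update H s y).
Proof.
move=> pdH sy_gt0 v v_neq0; rewrite dot_bfgs_update /=.
have [sv_eq0|sv_neq0] := eqVneq (dot s v) 0.
  by rewrite sv_eq0 mulr0 scale0r subr0 expr0n /= mulr0 addr0; apply: pdH.
apply: ltr_wpDl; first exact: pd_psd.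
by rewrite mulr_gt0 ?invr_gt0 // exprn_even_gt0.
Qed.

Lemma bfgs_update_mulmx_inv H B g s y :
  H^T = H -> H *m B = 1%:M -> s = - (H *m g) ->
  dot s y != 0 -> dot g (H *m g) != 0 ->
  bfgs_update H s y *m (B - (dot g (H *m g))^-1 *: (g *m g^T)
                          + (dot s y)^-1 *: (y *m y^T)) = 1%:M.
Proof.
move=> symH HB sE sy_neq0 G_neq0; apply: eq_mx_mulmx => v; rewrite mul1mx -mulmxA.
set r := (dot s y)^-1; set k := (dot g (H *m g))^-1; set w := B *m v.
have Hw : H *m w = v by rewrite /w mulmxA HB mul1mx.
have Hg : H *m g = - s by rewrite sE opprK.
have -> : (B - k *: (g *m g^T) + r *: (y *m y^T)) *m v
          = w - (k * dot g v) *: g + (r * dot y v) *: y.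
  by rewrite !mulmxDl mulNmx -!scalemxAl -!mulmxA !mulmx_outer !scalerA.
rewrite bfgs_update_mulmx /= -/r.
have sw : dot s w = - dot g v by rewrite sE dotNl dotC (dot_sym_mulmx _ _ symH) Hw.
have sg : dot s g = - dot g (H *m g) by rewrite sE dotNl dotC.
have -> : dot s (w - (k * dot g v) *: g + (r * dot y v) *: y) = dot y v.
  by rewrite dotDr dotBr !dotZr sw sg /k /r; field; rewrite sy_neq0 G_neq0.
rewrite addrK mulmxBr -scalemxAr Hw Hg scalerN opprK dotDr dotZr (dotC y s).
by apply/matrixP => i j; rewrite !mxE /r; field.
Qed.

Lemma bfgs_V_congr A s y (r : R) : A^T = A -> y = A *m s -> r * dot s y = 1 ->
  (1%:M - r *: (y *m s^T)) *m A *m (1%:M - r *: (s *m y^T)) = A - r *: (y *m y^T).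
Proof.
move=> symA yE r_sy; apply: eq_mx_mulmx => v.
rewrite -!mulmxA !mulmxBl !mul1mx -!scalemxAl -!mulmxA !mulmx_outer !scalerA.
rewrite mulmxBr -scalemxAr -yE dotBr dotZr (dot_sym_mulmx _ _ symA) -yE (dotC y v).
by rewrite mulrAC r_sy mul1r subrr mulr0 scale0r subr0.
Qed.

Lemma mxtrace_bfgs_update H A s y : A^T = A -> y = A *m s -> dot s y != 0 ->
  \tr (bfgs_update H s y *m A) = \tr (H *m A) + 1 - dot y (H *m y) / dot s y.
Proof.
move=> symA yE sy0; rewrite /bfgs_update /= -/(dot s y); set r := (dot s y)^-1.
have r_sy : r * dot s y = 1 by rewrite mulVf.
rewrite (mulmxDl _ _ A) mxtraceD -scalemxAl mxtraceZ mxtrace_outerl -yE.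
rewrite -!mulmxA mxtrace_mulC -!mulmxA trmx_1_sub_outer.
rewrite (mulmxA (1%:M - _) A) (bfgs_V_congr symA yE r_sy) r_sy mulmxBr -scalemxAr.
rewrite linearB /= mxtraceZ mxtrace_outer; ring.
Qed.

End BfgsUpdate.

(* With d = F / g^T H g, t = s^T y / g^T H g and a = y^T H y / s^T y, the number
   a + d - 2 is the decrease of the potential and (g^T H g) (d - 2 + t) is the error
   after the trial step; the hypotheses are the two Cauchy-Schwarz inequalities. *)
Lemma bfgs_ratio_ineq (R : realFieldType) (d t a : R) :
  0 < d -> 0 < t -> t <= a -> 1 <= d * t ->
  0 <= a + d - 2 /\ (a + d - 2 <= 1/4 -> d - 2 + t <= d / 2).
Proof.
move=> d_gt0 t_gt0 le_ta dt_ge1.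
have td_ge2 : 2 <= t + d.
  have : 4 <= (t + d) ^+ 2 by have := sqr_ge0 (t - d); rewrite !expr2; nra.
  rewrite expr2 => sq_ge4; rewrite leNgt; apply/negP => lt2.
  have : (t + d) * (t + d) < 2 * 2 by apply: ltr_pM; lra.
  lra.
split=> [|small]; first lra.
have [d_ge|d_lt] := leP (1/2) d; first lra.
nra.
Qed.

Section QuadraticModel.
Variables (R : realType) (n : nat) (A : 'M[R]_n) (b : 'cV[R]_n) (c : R) (xs : 'cV[R]_n).
Hypotheses (symA : A^T = A) (pdA : pd A).
Implicit Types (x e s : 'cV[R]_n) (H : 'M[R]_n).

Lemma quadfE x : quadf A b c x = dot x (A *m x) / 2 + dot b x + c.
Proof. by rewrite /quadf /dot mulmxA. Qed.

Lemma quadf_shift e :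
  quadf A b c (xs + e) = quadf A b c xs + dot e (quadgrad A b xs) + dot e (A *m e) / 2.
Proof.
rewrite !quadfE /quadgrad mulmxDr !dotDl !dotDr (dot_sym_mulmx xs e symA) (dotC b e).
by field.
Qed.

Lemma quadgradD x s : quadgrad A b (x + s) - quadgrad A b x = A *m s.
Proof. by rewrite /quadgrad mulmxDr [A *m x + _ + b]addrAC [_ + A *m s]addrC addrK. Qed.

Lemma quadgrad_minimizer :
  (forall x, quadf A b c xs <= quadf A b c x) -> quadgrad A b xs = 0.
Proof.
move=> xs_min; set g := quadgrad A b xs; apply/eqP/negP => /negP g_neq0.
set p := dot g g; set q := dot g (A *m g).
have p_gt0 : 0 < p by apply: dot_self_gt0.
have q_gt0 : 0 < q by apply: pdA.
have := xs_min (xs + (- (p / q)) *: g).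
rewrite quadf_shift -scalemxAr !dotZl !dotZr -/g -/p -/q -addrA -lerBlDl subrr.
have -> : - (p / q) * p + - (p / q) * (- (p / q) * q) / 2 = - (p ^+ 2 / q / 2).
  by field; rewrite lt0r_neq0.
by rewrite oppr_ge0 leNgt !divr_gt0 ?exprn_gt0.
Qed.

Definition excess x := dot (x - xs) (A *m (x - xs)).

Definition potential H := \tr (H *m A) + \tr (invmx H *m invmx A).

Hypothesis grad_xs : quadgrad A b xs = 0.

Lemma quadf_excess x : quadf A b c x = quadf A b c xs + excess x / 2.
Proof.
have {1}-> : x = xs + (x - xs) by rewrite addrC subrK.
by rewrite quadf_shift grad_xs dot0r addr0.
Qed.

Lemma quadgrad_excess x : quadgrad A b x = A *m (x - xs).
Proof. by rewrite -(quadgradD xs) grad_xs subr0 addrC subrK. Qed.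

Lemma ltr_quadf x x' : (quadf A b c x' < quadf A b c x) = (excess x' < excess x).
Proof. by rewrite (quadf_excess x) (quadf_excess x') ltrD2l ltr_pM2r ?invr_gt0. Qed.

Lemma potential_ge0 H : pd H -> 0 <= potential H.
Proof.
move=> pdH; apply: addr_ge0; apply: mxtrace_psd_mul_ge0; rewrite ?trmx_inv ?symA //;
  by apply: pd_psd => //; apply: pd_invmx.
Qed.

Section TrialStep.
Variables (x : 'cV[R]_n) (H : 'M[R]_n).
Hypotheses (symH : H^T = H) (pdH : pd H) (g_neq0 : quadgrad A b x != 0).

Let e := x - xs.
Let g := quadgrad A b x.
Let s := - (H *m g).
Let y := A *m s.
Let F := excess x.
Let G := dot g (H *m g).
Let S := dot s y.
Let T := dot y (H *m y).

Let gE : g = A *m e. Proof. exact: quadgrad_excess. Qed.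
Let G_gt0 : 0 < G. Proof. exact: pdH. Qed.
Let GE : G = - dot e (A *m s).
Proof. by rewrite /G -[H *m g]opprK -/s dotNr gE dotC (dot_sym_mulmx _ _ symA). Qed.
Let s_neq0 : s != 0.
Proof. by apply: contraTneq G_gt0 => s0; rewrite GE s0 mulmx0 dot0r oppr0 ltxx. Qed.
Let F_gt0 : 0 < F.
Proof. by apply: pdA; apply: contraNneq g_neq0 => e0; rewrite quadgrad_excess e0 mulmx0. Qed.

Lemma bfgs_curvature_gt0 : 0 < S.
Proof. exact: pdA. Qed.

Let S_gt0 := bfgs_curvature_gt0.

Let cauchy_schwarz_A : G ^+ 2 <= F * S.
Proof. by rewrite GE sqrrN; apply: psd_cauchy_schwarz => //; apply: pd_psd. Qed.

Let cauchy_schwarz_H : S ^+ 2 <= G * T.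
Proof.
have -> : S = - dot g (H *m y) by rewrite /S /s dotNl dotC (dot_sym_mulmx _ _ symH).
by rewrite sqrrN; apply: psd_cauchy_schwarz => //; apply: pd_psd.
Qed.

Lemma excess_trial : excess (x + s) = F - 2 * G + S.
Proof.
rewrite /excess (_ : x + s - xs = e + s); last by rewrite addrAC.
rewrite mulmxDr dotDl !dotDr (dot_sym_mulmx s e symA) GE /S /y.
by rewrite (_ : F = dot e (A *m e)) //; ring.
Qed.

Lemma potential_trial :
  potential (bfgs_update H s y) = potential H - (T / S + F / G - 2).
Proof.
have [S_neq0 G_neq0] : S != 0 /\ G != 0 by rewrite !lt0r_neq0.
have unitA := pd_unitmx pdA.
have invH' : invmx (bfgs_update H s y)
             = invmx H - G^-1 *: (g *m g^T) + S^-1 *: (y *m y^T).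
  apply/invmx_eq/bfgs_update_mulmx_inv => //.
  exact/mulmxV/pd_unitmx.
have gAg : dot g (invmx A *m g) = F by rewrite gE mulmxA mulVmx // mul1mx dotC.
have yAy : dot y (invmx A *m y) = S by rewrite mulmxA mulVmx // mul1mx dotC.
rewrite /potential (mxtrace_bfgs_update _ symA) // invH' mulmxDl mulmxBl.
rewrite -!scalemxAl mxtraceD linearB /= !mxtraceZ !mxtrace_outerl gAg yAy.
by rewrite -/S -/T mulVf //; ring.
Qed.

Lemma trial_progress : 0 <= T / S + F / G - 2 /\
  (4 * (T / S + F / G - 2) <= 1 -> 2 * excess (x + s) <= F).
Proof.
have [S_neq0 G_neq0] : S != 0 /\ G != 0 by rewrite !lt0r_neq0.
have [||||D_ge0 D_small] := @bfgs_ratio_ineq _ (F / G) (S / G) (T / S).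
- exact: divr_gt0.
- exact: divr_gt0.
- rewrite -subr_ge0 (_ : T / S - S / G = (G * T - S ^+ 2) / (S * G)).
    by rewrite divr_ge0 ?subr_ge0 // mulr_ge0 // ltW.
  by field; rewrite S_neq0 G_neq0.
- rewrite -subr_ge0 (_ : F / G * (S / G) - 1 = (F * S - G ^+ 2) / G ^+ 2).
    by rewrite divr_ge0 ?subr_ge0 // sqr_ge0.
  by field; rewrite G_neq0.
split=> // small; rewrite excess_trial.
have := D_small ltac:(lra); rewrite -(ler_pM2l G_gt0).
have -> : G * (F / G - 2 + S / G) = F - 2 * G + S by field.
have -> : G * (F / G / 2) = F / 2 by field.
lra.
Qed.

End TrialStep.

Lemma bfgs_step_spec st : st.2^T = st.2 -> pd st.2 ->
  let st' := bfgs_step A b c st in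
  [/\ st'.2^T = st'.2, pd st'.2, potential st'.2 <= potential st.2,
      excess st'.1 <= excess st.1 &
      (4 * (potential st.2 - potential st'.2) <= 1 -> 2 * excess st'.1 <= excess st.1)].
Proof.
case: st => x H /= symH pdH; case: eqVneq => [g0|g_neq0] /=.
  by rewrite /excess -quadgrad_excess g0 dot0r mulr0.
rewrite quadgradD (potential_trial symH pdH g_neq0).
have [D_ge0 progress] := trial_progress symH pdH g_neq0.
split.
- exact: bfgs_update_sym.
- exact/bfgs_update_pd/bfgs_curvature_gt0.
- by rewrite gerDl oppr_le0.
- by case: ifP => // /[!ltr_quadf] /ltW.
- rewrite opprB addrC subrK => /progress le_2trial; case: ifPn => // rejected.
  have : excess x <= excess (x - H *m quadgrad A b x) by rewrite leNgt -ltr_quadf.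
  lra.
Qed.

End QuadraticModel.

Lemma potential_halving (R : archiRealFieldType) (E P : nat -> R) :
  0 <= E 0 -> (forall k, 0 <= P k) ->
  (forall k, P k.+1 <= P k) -> (forall k, E k.+1 <= E k) ->
  (forall k, 4 * (P k - P k.+1) <= 1 -> 2 * E k.+1 <= E k) ->
  exists K, forall k, E k * 2 ^+ k <= K.
Proof.
move=> E0_ge0 P_ge0 P_decr E_decr E_halves.
(* m bounds the number of steps so far that lowered P by more than 1/4. *)
have count k : exists m : nat, m%:R <= 4 * (P 0 - P k) /\ E k * 2 ^+ k <= E 0 * 2 ^+ m.
  elim: k => [|k [m [m_le Ek_le]]]; first by exists 0%N; rewrite subrr mulr0 !expr0.
  have pow_ge0 : 0 <= (2 : R) ^+ k by rewrite exprn_ge0.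
  have [small|big] := lerP (4 * (P k - P k.+1)) 1.
  - exists m; split; first by have := P_decr k; lra.
    apply: le_trans Ek_le; rewrite exprS mulrA (mulrC _ 2).
    exact/(ler_wpM2r pow_ge0)/E_halves.
  - exists m.+1; split; first by rewrite -natr1; lra.
    rewrite !exprS mulrCA (mulrCA (E 0)) ler_pM2l //.
    exact: le_trans (ler_wpM2r pow_ge0 (E_decr k)) Ek_le.
pose M := Num.Def.archi_bound (4 * P 0).
exists (E 0 * 2 ^+ M) => k; have [m [m_le Ek_le]] := count k.
apply: le_trans Ek_le _; rewrite ler_wpM2l // ler_eXn2l ?ltr1n //.
have : (m%:R : R) < M%:R.
  apply: le_lt_trans m_le _; apply: le_lt_trans (archi_boundP _);
  by move: (P_ge0 k) (P_ge0 0%N); lra.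
by rewrite ltr_nat => /ltnW.
Qed.

Lemma norm_lt_of_sqr_lt (R : realDomainType) (a e : R) :
  0 < e -> a ^+ 2 < e ^+ 2 -> `|a| < e.
Proof.
move=> e_gt0; rewrite -(real_normK (num_real a)) => lt_sq.
rewrite ltNge; apply/negP => le_e_a.
by have := ler_pM (ltW e_gt0) (ltW e_gt0) le_e_a le_e_a; rewrite -!expr2 leNgt lt_sq.
Qed.

Lemma cvg_excess_geometric (R : realType) n (A : 'M[R]_n) xs (u : nat -> 'cV[R]_n) K :
  A^T = A -> pd A -> (forall k, excess A xs (u k) * 2 ^+ k <= K) -> u @ \oo --> xs.
Proof.
move=> symA pdA bound; apply/cvgrPdist_lt => eps eps_gt0.
set C := \tr (invmx A).
have C_ge0 : 0 <= C.
  by rewrite /C /mxtrace sumr_ge0 // => j _; apply/psd_diag_ge0/pd_psd/pd_invmx.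
have K_ge0 : 0 <= K.
  by apply: le_trans (bound 0%N); rewrite expr0 mulr1; apply: pd_psd.
have eps2_gt0 : 0 < eps ^+ 2 by rewrite exprn_gt0.
pose N := Num.Def.archi_bound (C * K / eps ^+ 2).
have CK_lt : C * K < eps ^+ 2 * N%:R.
  rewrite -ltr_pdivrMl // mulrC; apply: archi_boundP.
  by rewrite divr_ge0 ?mulr_ge0 // ltW.
exists N => // k /= le_Nk.
have pow_gt0 : 0 < (2 : R) ^+ k by rewrite exprn_gt0.
have k_lt_pow : (k%:R : R) < 2 ^+ k by rewrite -natrX ltr_nat ltn_expl.
rewrite [`|_|]mx_normrE; apply: bigmax_lt => // -[i j] _ /=.
rewrite (ord1 j) !mxE distrC; apply: norm_lt_of_sqr_lt => //.
have -> : u k i 0 - xs i 0 = (u k - xs) i 0 by rewrite !mxE.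
rewrite -(ltr_pM2r pow_gt0).
apply: le_lt_trans (ler_wpM2r (ltW pow_gt0) (sqr_coord_le_form _ i symA pdA)) _.
rewrite -mulrA; apply: le_lt_trans (ler_wpM2l C_ge0 (bound k)) _.
apply: lt_le_trans CK_lt _; rewrite ler_wpM2l ?ltW //.
by apply: le_lt_trans _ k_lt_pow; rewrite ler_nat.
Qed.

Lemma spd_pd (R : realType) n (M : 'M[R]_n) : spd M -> pd M.
Proof. by move=> [_ posM] v /posM; rewrite -mulmxA. Qed.

Theorem mainTheorem5 (R : realType) (n : nat) (A : 'M[R]_n) (b : 'cV[R]_n) (c : R)
  (xstar x0 : 'cV[R]_n) (H0 : 'M[R]_n) :
  spd A ->
  (forall x : 'cV[R]_n, quadf A b c xstar <= quadf A b c x) ->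
  spd H0 ->
  (fun k => (bfgs_seq A b c x0 H0 k).1) @ \oo --> xstar.
Proof.
move=> spdA xstar_min spdH0; have [symA pdA] := (spdA.1, spd_pd spdA).
have grad_xstar := quadgrad_minimizer symA pdA xstar_min.
pose st := bfgs_seq A b c x0 H0.
have st_spd k : (st k).2^T = (st k).2 /\ pd (st k).2.
  elim: k => [|k [symHk pdHk]]; first exact: (conj spdH0.1 (spd_pd spdH0)).
  by have [] := bfgs_step_spec c symA pdA grad_xstar symHk pdHk.
have step k := bfgs_step_spec c symA pdA grad_xstar (st_spd k).1 (st_spd k).2.
have [K bound] : exists K, forall k, excess A xstar (st k).1 * 2 ^+ k <= K.
  apply: (@potential_halving R _ (fun k => potential A (st k).2)) => [|k|k|k|k].
  - exact/pd_psd.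
  - exact/potential_ge0/(st_spd k).2.
  - by have [] := step k.
  - by have [] := step k.
  - by have [] := step k.
exact: cvg_excess_geometric symA pdA bound.
Qed.
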